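(* For all integers $n,k$ with $n\ge 4$ and $1\le k<n$, the Johnson graph $J(n,k)$ is paired 2-coverable.
   Context: Let $[n]=\{1,2,\dots,n\}$. The Johnson graph $J(n,k)$ ($0\le k\le n$) has as vertices the $k$-element subsets of $[n]$, two vertices being adjacent if and only if the corresponding subsets have exactly $k-1$ elements in common. A graph $G$ is \emph{paired 2-coverable} if for any four distinct vertices $u,v,x,y$ of $G$ there exist two vertex-disjoint paths $P$ and $Q$ in $G$ such that $P$ has endpoints $u$ and $v$, $Q$ has endpoints $x$ and $y$, and $V(P)\cup V(Q)=V(G)$. *)

From mathcomp Require Import all_boot all_order.
Set Implicit Arguments. Unset Strict Implicit. Unset Printing Implicit Defensive.

Definition is_path_between (T : finType) (adj : rel T) (p : seq T) (u v : T) :=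
  [/\ p != [::], head u p = u, last u p = v, uniq p & path adj u (behead p)].

Definition paired_2_coverable (T : finType) (adj : rel T) :=
  forall u v x y : T, uniq [:: u; v; x; y] ->
    exists P Q : seq T,
      [/\ is_path_between adj P u v, is_path_between adj Q x y,
          [disjoint P & Q] & forall w : T, (w \in P) || (w \in Q)].

Definition johnson_vertex (n k : nat) := {A : {set 'I_n} | #|A| == k}.

Definition johnson_adj (n k : nat) : rel (johnson_vertex n k) :=
  fun A B => #|val A :&: val B| == k.-1.
Arguments johnson_adj : clear implicits.

From mathcomp Require Import all_boot all_order zify.
Set Implicit Arguments. Unset Strict Implicit. Unset Printing Implicit Defensive.

(* For C \subset D, the k-sets A with C \subset A \subset D induce a copy of
   J(|D| - |C|, k - |C|), and J(n, k) is the case C = set0, D = setT. By induction on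
   |D| - |C| >= 4, each of these graphs is Hamiltonian-connected and paired
   2-coverable. If k = |C| + 1 or k = |D| - 1 the graph is complete, and J(4, 2) is the
   octahedron, where every vertex has a single non-neighbour; in both cases short paths
   joining the two pairs of terminals can be grown by inserting the remaining vertices
   one at a time. Otherwise an element a of D \ C splits the vertices into those
   avoiding a and those containing a, two smaller Johnson graphs. Every vertex has at
   least two neighbours on the other side and two vertices on one side have at most one
   common neighbour on the other, which is enough to glue Hamiltonian paths and paired
   covers of the two halves into ones of the whole graph. *)

Lemma disjointP (T : finType) (A B : {pred T}) :
  reflect (forall x, x \in A -> x \in B -> False) [disjoint A & B].
Proof.
apply: (iffP pred0P) => H x.
- by move=> xA xB; move: (H x); rewrite /= xA xB.
- by apply/negbTE/andP => -[xA xB]; apply: (H x).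
Qed.

Lemma exists_notin (T : finType) (V : {set T}) (s : seq T) :
  size s < #|V| -> exists2 w, w \in V & w \notin s.
Proof.
move=> lt_s_V; apply/subsetPn; apply: contraTN lt_s_V => /subset_leq_card le_V_s.
by rewrite -leqNgt (leq_trans le_V_s (card_size s)).
Qed.

Lemma card_setD2_gt0 (T : finType) (N : {set T}) u x : 2 < #|N| -> 0 < #|N :\: [set u; x]|.
Proof.
move=> N3; rewrite -(cardsID [set u; x] N) in N3.
have : #|N :&: [set u; x]| <= 2.
  by apply: leq_trans (subset_leq_card (subsetIr N _)) _; rewrite cards2; case: (u != x).
by move: N3; move: #|N :&: _| #|N :\: _| => i d; lia.
Qed.

Lemma mem_of_card_setD2_le1 (T : finType) (N : {set T}) u x : u != x -> 2 < #|N| ->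
  #|N :\: [set u; x]| <= 1 -> (u \in N) && (x \in N).
Proof.
move=> ux N3 small; rewrite -(cardsID [set u; x] N) in N3.
have : [set u; x] \subset N.
  apply/setIidPr/eqP; rewrite eqEcard subsetIr cards2 ux /=.
  by move: N3 small; move: #|N :&: _| #|N :\: _| => i d; lia.
by rewrite subUset !sub1set.
Qed.

Lemma card_le_preimage (aT rT : finType) (f : aT -> rT) (X : {set aT}) (F : {set rT}) :
  injective f -> {subset F <= f @: X} -> #|F| <= #|X|.
Proof. by move=> f_inj FX; rewrite -(card_imset X f_inj); apply/subset_leq_card/subsetP. Qed.

Lemma exists_setD (T : finType) (C D : {set T}) : #|C| < #|D| -> exists2 a, a \in D & a \notin C.
Proof. by rewrite cardE => /exists_notin [a aD]; rewrite mem_enum; exists a. Qed.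

Lemma uniq4_neq (T : eqType) (a b c d : T) : uniq [:: a; b; c; d] ->
  [/\ a != b, a != c, a != d & [/\ b != c, b != d & c != d]].
Proof. by rewrite /= !inE !negb_or => /and4P [/and3P [-> -> ->] /andP [-> ->] -> _]. Qed.

Lemma uniq4_of_neq (T : eqType) (a b c d : T) :
  a != b -> a != c -> a != d -> b != c -> b != d -> c != d -> uniq [:: a; b; c; d].
Proof. by move=> ab ac ad bc bd cd; rewrite /= !inE !negb_or ab ac ad bc bd cd. Qed.

Ltac uniq4_from uq :=
  case/uniq4_neq: uq => ? ? ? [? ? ?]; apply: uniq4_of_neq => //; by rewrite eq_sym.

Section Paths.

Variables (T : finType) (adj : rel T).

Lemma path_between_cons u p v :
  is_path_between adj (u :: p) u v <-> [/\ last u p = v, uniq (u :: p) & path adj u p].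
Proof. by rewrite /is_path_between /=; split; [case=> _ _ -> -> -> | case=> -> -> ->]. Qed.

Lemma path_between_head p u v : is_path_between adj p u v -> exists p', p = u :: p'.
Proof. by case: p => [[]//|a p [] _ /= -> _ _ _]; exists p. Qed.

Lemma path_between1 u : is_path_between adj [:: u] u u.
Proof. exact/path_between_cons. Qed.

Lemma path_between_cat p q u a b v :
  is_path_between adj p u a -> is_path_between adj q b v -> adj a b ->
  [disjoint p & q] -> is_path_between adj (p ++ q) u v.
Proof.
move=> hp hq ab dpq.
have [p' ep] := path_between_head hp; have [q' eq] := path_between_head hq; subst p q.
move/path_between_cons: hp => [lp up pp]; move/path_between_cons: hq => [lq uq pq].
rewrite cat_cons; apply/path_between_cons; split.
- by rewrite last_cat.
- rewrite -cat_cons cat_uniq up uq andbT.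
  by move: dpq; rewrite disjoint_sym disjoint_has.
- by rewrite cat_path pp lp /= ab pq.
Qed.

Lemma path_between_behead p u v : is_path_between adj p u v -> u != v ->
  exists p1 p2, [/\ p = u :: p1 :: p2, adj u p1 & is_path_between adj (p1 :: p2) p1 v].
Proof.
move=> hp uv; have [p' ep] := path_between_head hp; subst p.
move/path_between_cons: hp; case: p' => [[/= vu]|p1 p2 [lp /andP [_ up] /= /andP [a pp]]].
  by rewrite vu eqxx in uv.
by exists p1, p2; split=> //; apply/path_between_cons.
Qed.

Lemma path_between_insert u p1 p2 v r :
  is_path_between adj (u :: p1 :: p2) u v -> adj u r -> adj r p1 -> r \notin u :: p1 :: p2 ->
  is_path_between adj (u :: r :: p1 :: p2) u v.
Proof.
move=> /path_between_cons [lp up pp] ur rp; rewrite in_cons negb_or => /andP [ru rp2].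
apply/path_between_cons; split=> //.
- by rewrite cons_uniq !inE negb_or eq_sym ru (andP up).1 /= rp2 (andP up).2.
- by move: pp => /= /andP [_ ->]; rewrite ur rp.
Qed.

Hypothesis adj_sym : symmetric adj.

Lemma path_between_rev p u v : is_path_between adj p u v -> is_path_between adj (rev p) v u.
Proof.
move=> hp; have [p' ep] := path_between_head hp; subst p.
move/path_between_cons: hp => [lp up pp].
rewrite lastI rev_rcons lp; apply/path_between_cons; split.
- by case: p' lp {up pp} => [/= ->|a s _] //=; rewrite rev_cons last_rcons.
- by rewrite -lp -rev_rcons rev_uniq -lastI.
- by rewrite -lp rev_path (eq_path (e' := adj)) // => x y; apply: adj_sym.
Qed.

End Paths.

Section Covers.

Variables (T : finType) (adj : rel T).
Hypothesis adj_sym : symmetric adj.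
Implicit Types (V W : {set T}) (u v w x y z : T).

Definition paired_cover W u v x y :=
  exists P Q : seq T, [/\ is_path_between adj P u v, is_path_between adj Q x y,
    [disjoint P & Q] & forall w, (w \in P) || (w \in Q) = (w \in W)].

Definition hamiltonian_connected_on W :=
  forall u v, u \in W -> v \in W -> u != v -> exists2 p, is_path_between adj p u v & p =i W.

Definition paired_2_coverable_on W :=
  forall u v x y, u \in W -> v \in W -> x \in W -> y \in W -> uniq [:: u; v; x; y] ->
  paired_cover W u v x y.

Definition deg_in V w := #|[set z in V | adj w z]|.

Definition cross_edges V1 V2 :=
  forall u x v y, u \in V1 -> x \in V1 -> v \in V2 -> y \in V2 -> u != x -> v != y ->
  exists w1 w2 z1 z2, [/\ [&& w1 \in V1, w2 \in V1, z1 \in V2 & z2 \in V2],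
     uniq [:: u; x; w1; w2], uniq [:: v; y; z1; z2], adj w1 z1 & adj w2 z2].

Definition at_most_one_nonneighbour V :=
  forall w z z', w \in V -> z \in V -> z' \in V -> w != z -> w != z' ->
  ~~ adj w z -> ~~ adj w z' -> z = z'.

Lemma paired_2_coverable_setT : paired_2_coverable_on setT -> paired_2_coverable adj.
Proof.
move=> cov u v x y uq.
have [P [Q [hP hQ dPQ cPQ]]] := cov u v x y (in_setT u) (in_setT v) (in_setT x) (in_setT y) uq.
by exists P, Q; split=> // w; rewrite cPQ in_setT.
Qed.

Lemma complete_nonneighbour V :
  {in V &, forall w z, w != z -> adj w z} -> at_most_one_nonneighbour V.
Proof. by move=> cV w z z' wV zV _ wz _ nwz; rewrite cV in nwz. Qed.

Lemma cover_subl W (P Q : seq T) :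
  (forall w, (w \in P) || (w \in Q) = (w \in W)) -> {subset P <= W}.
Proof. by move=> c w wP; rewrite -c wP. Qed.

Lemma cover_subr W (P Q : seq T) :
  (forall w, (w \in P) || (w \in Q) = (w \in W)) -> {subset Q <= W}.
Proof. by move=> c w wQ; rewrite -c wQ orbT. Qed.

Lemma paired_cover_sym W u v x y : paired_cover W u v x y -> paired_cover W x y u v.
Proof.
move=> [P [Q [hP hQ dPQ cPQ]]]; exists Q, P; split=> //.
- by rewrite disjoint_sym.
- by move=> w; rewrite orbC.
Qed.

Lemma paired_cover_revl W u v x y : paired_cover W u v x y -> paired_cover W v u x y.
Proof.
move=> [P [Q [hP hQ dPQ cPQ]]]; exists (rev P), Q; split=> //.
- exact: path_between_rev.
- by apply/disjointP => w; rewrite mem_rev; move/disjointP: dPQ; apply.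
- by move=> w; rewrite mem_rev.
Qed.

Lemma paired_cover_revr W u v x y : paired_cover W u v x y -> paired_cover W u v y x.
Proof. by move/paired_cover_sym/paired_cover_revl/paired_cover_sym. Qed.

Lemma neighbour_avoiding V w y : 1 < deg_in V w -> exists2 z, z \in V & (z != y) && adj w z.
Proof.
move=> deg2; have [z] := exists_notin (s := [:: y]) deg2.
by rewrite !inE => /andP [zV wz] zy; exists z; rewrite ?zy.
Qed.

Lemma cross_edges_sym V1 V2 : cross_edges V1 V2 -> cross_edges V2 V1.
Proof.
move=> cr u x v y uV xV vV yV ux vy.
have [w1 [w2 [z1 [z2 [/and4P [? ? ? ?] ? ? a1 a2]]]]] := cr v y u x vV yV uV xV vy ux.
by exists z1, z2, w1, w2; split=> //; [apply/and4P | rewrite adj_sym..].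
Qed.

Section JoinCases.

Variables V1 V2 : {set T}.
Hypothesis V12 : [disjoint V1 & V2].
Hypotheses (hc1 : hamiltonian_connected_on V1) (hc2 : hamiltonian_connected_on V2).
Hypotheses (pc1 : paired_2_coverable_on V1) (pc2 : paired_2_coverable_on V2).
Hypothesis deg12 : {in V1, forall w, 1 < deg_in V2 w}.
Hypothesis deg21 : {in V2, forall w, 1 < deg_in V1 w}.
Hypotheses (big1 : 4 <= #|V1|) (nontrivial2 : 1 < #|V2|).
Hypothesis cross12 : cross_edges V1 V2.

Let separated w : w \in V1 -> w \in V2 -> False.
Proof. by move/(disjointFr V12) ->. Qed.

(* Detour from u through all of V2 before going on to the second vertex of P. *)
Lemma path_absorb P u v :
  is_path_between adj P u v -> u != v -> {subset P <= V1} ->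
  exists2 P', is_path_between adj P' u v & forall w, (w \in P') = (w \in P) || (w \in V2).
Proof.
move=> hP uv PV1; have [p1 [p2 [eP up1 hp]]] := path_between_behead hP uv; subst P.
have uV1 : u \in V1 by apply: PV1; rewrite inE eqxx.
have p1V1 : p1 \in V1 by apply: PV1; rewrite !inE eqxx orbT.
have [z zV2 /andP [_ uz]] := neighbour_avoiding u (deg12 uV1).
have [z' z'V2 /andP [zz' p1z']] := neighbour_avoiding z (deg12 p1V1).
have zz2 : z != z' by rewrite eq_sym.
have [R hR cR] := hc2 zV2 z'V2 zz2.
have up : u \notin p1 :: p2 by case/path_between_cons: hP => _ /andP [].
exists (u :: R ++ p1 :: p2).
- apply: (path_between_cat (path_between1 adj u) _ uz).
    apply: (path_between_cat hR hp); first by rewrite adj_sym.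
    apply/disjointP => w; rewrite cR => wV2 wp.
    by apply: (separated _ wV2); apply: PV1; rewrite inE wp orbT.
  apply/disjointP => w; rewrite inE => /eqP -> {w}; rewrite mem_cat cR.
  by case/orP=> [/(separated uV1)|]; last by apply/negP.
- move=> w; rewrite !(inE, mem_cat) cR.
  by case: (w == u); case: (w == p1); case: (w \in p2); case: (w \in V2).
Qed.

Lemma paired_cover_join_in1 u v x y :
  u \in V1 -> v \in V1 -> x \in V1 -> y \in V1 -> uniq [:: u; v; x; y] ->
  paired_cover (V1 :|: V2) u v x y.
Proof.
move=> uV vV xV yV uq; have [uv _ _ _] := uniq4_neq uq.
have [P [Q [hP hQ dPQ cPQ]]] := pc1 uV vV xV yV uq.
have [P' hP' cP'] := path_absorb hP uv (cover_subl cPQ).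
exists P', Q; split=> //.
- apply/disjointP => w; rewrite cP' => /orP [wP wQ|wV2 wQ].
    by move/disjointP: dPQ => /(_ w wP wQ).
  exact: separated (cover_subr cPQ wQ) wV2.
- by move=> w; rewrite cP' in_setU -cPQ; case: (w \in P); case: (w \in Q); case: (w \in V2).
Qed.

Lemma paired_cover_join_last2 u v x y :
  u \in V1 -> v \in V1 -> x \in V1 -> y \in V2 -> uniq [:: u; v; x; y] ->
  paired_cover (V1 :|: V2) u v x y.
Proof.
move=> uV vV xV yV uq.
have [w wV1] := exists_notin (s := [:: u; v; x]) big1.
rewrite !inE !negb_or => /and3P [wu wv wx].
have [z zV2 /andP [zy wz]] := neighbour_avoiding y (deg12 wV1).
have uq' : uniq [:: u; v; x; w].
  by uniq4_from uq.
have [P [Q [hP hQ dPQ cPQ]]] := pc1 uV vV xV wV1 uq'.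
have [R hR cR] := hc2 zV2 yV zy.
exists P, (Q ++ R); split=> //.
- apply: (path_between_cat hQ hR wz); apply/disjointP => a aQ; rewrite cR.
  exact: separated (cover_subr cPQ aQ).
- apply/disjointP => a aP; rewrite mem_cat cR => /orP [aQ|].
    by move/disjointP: dPQ => /(_ a aP aQ).
  exact: separated (cover_subl cPQ aP).
- by move=> a; rewrite mem_cat cR orbA cPQ in_setU.
Qed.

Lemma paired_cover_join_split u v x y :
  u \in V1 -> v \in V1 -> x \in V2 -> y \in V2 -> uniq [:: u; v; x; y] ->
  paired_cover (V1 :|: V2) u v x y.
Proof.
move=> uV vV xV yV /uniq4_neq [uv _ _ [_ _ xy]].
have [P hP cP] := hc1 uV vV uv; have [Q hQ cQ] := hc2 xV yV xy.
exists P, Q; split=> //.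
- by apply/disjointP => a; rewrite cP cQ; apply: separated.
- by move=> a; rewrite cP cQ in_setU.
Qed.

Lemma paired_cover_join_cross u v x y :
  u \in V1 -> v \in V2 -> x \in V1 -> y \in V2 -> uniq [:: u; v; x; y] ->
  paired_cover (V1 :|: V2) u v x y.
Proof.
move=> uV vV xV yV /uniq4_neq [_ ux _ [_ vy _]].
have [w1 [w2 [z1 [z2 [/and4P [w1V w2V z1V z2V] uw vz a1 a2]]]]] := cross12 uV xV vV yV ux vy.
have uq1 : uniq [:: u; w1; x; w2] by uniq4_from uw.
have uq2 : uniq [:: z1; v; z2; y] by uniq4_from vz.
have [P1 [Q1 [hP1 hQ1 /disjointP d1 c1]]] := pc1 uV w1V xV w2V uq1.
have [P2 [Q2 [hP2 hQ2 /disjointP d2 c2]]] := pc2 z1V vV z2V yV uq2.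
have sep (A B : seq T) a : {subset A <= V1} -> {subset B <= V2} -> a \in A -> a \in B -> False.
  by move=> AV BV aA aB; apply: separated (AV a aA) (BV a aB).
exists (P1 ++ P2), (Q1 ++ Q2); split.
- apply: (path_between_cat hP1 hP2 a1); apply/disjointP => a.
  exact: sep (cover_subl c1) (cover_subl c2).
- apply: (path_between_cat hQ1 hQ2 a2); apply/disjointP => a.
  exact: sep (cover_subr c1) (cover_subr c2).
- apply/disjointP => a; rewrite !mem_cat => /orP [aP1|aP2] /orP [aQ1|aQ2].
  + exact: d1 aP1 aQ1.
  + exact: sep (cover_subl c1) (cover_subr c2) aP1 aQ2.
  + exact: sep (cover_subr c1) (cover_subl c2) aQ1 aP2.
  + exact: d2 aP2 aQ2.
- move=> a; rewrite !mem_cat in_setU -c1 -c2.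
  by case: (a \in P1); case: (a \in P2); case: (a \in Q1); case: (a \in Q2).
Qed.

Lemma hamiltonian_path_join_cross u v : u \in V1 -> v \in V2 ->
  exists2 p, is_path_between adj p u v & p =i V1 :|: V2.
Proof.
move=> uV vV; have [z zV2] := exists_notin (s := [:: v]) nontrivial2; rewrite inE => zv.
have [w wV1 /andP [wu zw]] := neighbour_avoiding u (deg21 zV2).
have uw : u != w by rewrite eq_sym.
have [p hp cp] := hc1 uV wV1 uw; have [q hq cq] := hc2 zV2 vV zv.
exists (p ++ q).
- apply: (path_between_cat hp hq); first by rewrite adj_sym.
  by apply/disjointP => a; rewrite cp cq; apply: separated.
- by move=> a; rewrite mem_cat cp cq in_setU.
Qed.

End JoinCases.

Lemma hamiltonian_connected_join V1 V2 : [disjoint V1 & V2] ->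
  hamiltonian_connected_on V1 -> hamiltonian_connected_on V2 ->
  {in V1, forall w, 1 < deg_in V2 w} -> {in V2, forall w, 1 < deg_in V1 w} ->
  1 < #|V1| -> 1 < #|V2| -> hamiltonian_connected_on (V1 :|: V2).
Proof.
move=> V12 hc1 hc2 deg12 deg21 nt1 nt2 u v.
have V21 : [disjoint V2 & V1] by rewrite disjoint_sym.
rewrite !in_setU => /orP [] uV /orP [] vV uv.
- have [p hp cp] := hc1 u v uV vV uv.
  have [|p' hp' cp'] := path_absorb V12 hc2 deg12 hp uv; first by move=> w; rewrite cp.
  by exists p' => // w; rewrite cp' cp in_setU.
- exact: hamiltonian_path_join_cross.
- have [p hp cp] := hamiltonian_path_join_cross V21 hc2 hc1 deg12 nt1 uV vV.
  by exists p => // w; rewrite cp setUC.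
- have [p hp cp] := hc2 u v uV vV uv.
  have [|p' hp' cp'] := path_absorb V21 hc1 deg21 hp uv; first by move=> w; rewrite cp.
  by exists p' => // w; rewrite cp' cp in_setU orbC.
Qed.

Lemma paired_2_coverable_join V1 V2 : [disjoint V1 & V2] ->
  hamiltonian_connected_on V1 -> hamiltonian_connected_on V2 ->
  paired_2_coverable_on V1 -> paired_2_coverable_on V2 ->
  {in V1, forall w, 1 < deg_in V2 w} -> {in V2, forall w, 1 < deg_in V1 w} ->
  4 <= #|V1| -> 4 <= #|V2| -> cross_edges V1 V2 ->
  paired_2_coverable_on (V1 :|: V2).
Proof.
move=> V12 hc1 hc2 pc1 pc2 deg12 deg21 big1 big2 cr12 u v x y.
have V21 : [disjoint V2 & V1] by rewrite disjoint_sym.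
have cr21 := cross_edges_sym cr12.
rewrite !in_setU => /orP [] u1 /orP [] v1 /orP [] x1 /orP [] y1 uq.
- exact: paired_cover_join_in1.
- exact: paired_cover_join_last2.
- by apply: paired_cover_revr; apply: paired_cover_join_last2 => //; uniq4_from uq.
- exact: paired_cover_join_split.
- by apply: paired_cover_sym; apply: paired_cover_join_last2 => //; uniq4_from uq.
- exact: paired_cover_join_cross.
- by apply: paired_cover_revr; apply: paired_cover_join_cross => //; uniq4_from uq.
- rewrite setUC; apply: paired_cover_sym; apply: paired_cover_revr.
  by apply: paired_cover_join_last2 => //; uniq4_from uq.
- apply: paired_cover_sym; apply: paired_cover_revr.
  by apply: paired_cover_join_last2 => //; uniq4_from uq.
- by apply: paired_cover_revl; apply: paired_cover_join_cross => //; uniq4_from uq.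
- apply: paired_cover_revl; apply: paired_cover_revr.
  by apply: paired_cover_join_cross => //; uniq4_from uq.
- rewrite setUC; apply: paired_cover_sym.
  by apply: paired_cover_join_last2 => //; uniq4_from uq.
- by rewrite setUC; apply: paired_cover_join_split.
- rewrite setUC; apply: paired_cover_revr.
  by apply: paired_cover_join_last2 => //; uniq4_from uq.
- by rewrite setUC; apply: paired_cover_join_last2.
- by rewrite setUC; apply: paired_cover_join_in1.
Qed.

(* Pick z1, z2 in V2 other than v, y: their neighbours outside {u, x} yield distinct
   w1, w2 unless both neighbourhoods contain u and x. *)
Lemma cross_edges_of_degree V1 V2 :
  {in V2, forall z, 2 < deg_in V1 z} ->
  (forall z1 z2 w w', z1 \in V2 -> z2 \in V2 -> z1 != z2 -> w \in V1 -> w' \in V1 ->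
     adj z1 w -> adj z2 w -> adj z1 w' -> adj z2 w' -> w = w') ->
  4 <= #|V2| -> cross_edges V1 V2.
Proof.
move=> deg3 common big2 u x v y uV xV vV yV ux vy.
have [z1 z1V] := exists_notin (s := [:: v; y]) (ltnW big2).
rewrite !inE negb_or => /andP [z1v z1y].
have [z2 z2V] := exists_notin (s := [:: v; y; z1]) big2.
rewrite !inE !negb_or => /and3P [z2v z2y z2z1].
pose N z := [set w in V1 | adj z w] :\: [set u; x].
suff [w1 [w2 [w1N w2N w12]]] : exists w1 w2, [/\ w1 \in N z1, w2 \in N z2 & w1 != w2].
  move: w1N w2N; rewrite !inE !negb_or.
  move=> /andP [/andP [w1u w1x] /andP [w1V a1]] /andP [/andP [w2u w2x] /andP [w2V a2]].
  exists w1, w2, z1, z2; rewrite w1V w2V z1V z2V adj_sym a1 adj_sym a2.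
  by split=> //; apply: uniq4_of_neq => //; rewrite eq_sym.
have N1 : 0 < #|N z1| := card_setD2_gt0 u x (deg3 z1 z1V).
have N2 : 0 < #|N z2| := card_setD2_gt0 u x (deg3 z2 z2V).
have [N2big|N2small] := leqP 2 #|N z2|.
  have /card_gt0P [w1 w1N] := N1.
  have [w2 w2N] := exists_notin (s := [:: w1]) N2big; rewrite inE => w21.
  by exists w1, w2; rewrite eq_sym.
have [N1big|N1small] := leqP 2 #|N z1|.
  have /card_gt0P [w2 w2N] := N2.
  have [w1 w1N] := exists_notin (s := [:: w2]) N1big; rewrite inE => w12.
  by exists w1, w2.
have /andP [uN1 xN1] := mem_of_card_setD2_le1 ux (deg3 z1 z1V) N1small.
have /andP [uN2 xN2] := mem_of_card_setD2_le1 ux (deg3 z2 z2V) N2small.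
move: uN1 xN1 uN2 xN2; rewrite !inE => /andP [_ a1] /andP [_ a2] /andP [_ a3] /andP [_ a4].
have z12 : z1 != z2 by rewrite eq_sym.
by move: ux; rewrite (common z1 z2 u x z1V z2V z12 uV xV a1 a3 a2 a4) eqxx.
Qed.

Section NearlyComplete.

Variable V : {set T}.
Hypothesis nonadj : at_most_one_nonneighbour V.

(* r misses at most one vertex, so it is adjacent to both of the first two
   vertices of one of the paths and can be inserted between them. *)
Lemma paired_cover_setU1 W u v x y r :
  W \subset V -> r \in V -> r \notin W -> u != v -> x != y ->
  paired_cover W u v x y -> paired_cover (r |: W) u v x y.
Proof.
move=> WV rV rW uv xy [P [Q [hP hQ dPQ cPQ]]].
have [p1 [p2 [eP up1 _]]] := path_between_behead hP uv.
have [q1 [q2 [eQ xq1 _]]] := path_between_behead hQ xy.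
subst P Q.
have rP : r \notin u :: p1 :: p2 by apply: contra rW => /(cover_subl cPQ).
have rQ : r \notin x :: q1 :: q2 by apply: contra rW => /(cover_subr cPQ).
have [/andP [ur rp1]|nP] := boolP (adj u r && adj r p1).
  exists (u :: r :: p1 :: p2), (x :: q1 :: q2); split=> //.
  - exact: path_between_insert.
  - by move: dPQ; rewrite !disjoint_cons rQ.
  - by move=> w; rewrite in_setU1 -cPQ !in_cons; case: (w == u); case: (w == r).
have [/andP [xr rq1]|nQ] := boolP (adj x r && adj r q1).
  exists (u :: p1 :: p2), (x :: r :: q1 :: q2); split=> //.
  - exact: path_between_insert.
  - rewrite disjoint_sym !disjoint_cons rP.
    by move: dPQ; rewrite disjoint_sym !disjoint_cons.
  - by move=> w; rewrite in_setU1 -cPQ !in_cons; case: (w == x); case: (w == r); rewrite ?orbT.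
have [z1 z1P nz1] : exists2 z1, z1 \in u :: p1 :: p2 & ~~ adj r z1.
  by move: nP; rewrite negb_and adj_sym => /orP [h|h]; [exists u|exists p1];
     rewrite ?h ?inE ?eqxx ?orbT.
have [z2 z2Q nz2] : exists2 z2, z2 \in x :: q1 :: q2 & ~~ adj r z2.
  by move: nQ; rewrite negb_and adj_sym => /orP [h|h]; [exists x|exists q1];
     rewrite ?h ?inE ?eqxx ?orbT.
have z1W := cover_subl cPQ z1P; have z2W := cover_subr cPQ z2Q.
have rz a : a \in W -> r != a by move=> aW; apply: contraNneq rW => ->.
have e := nonadj rV (subsetP WV z1 z1W) (subsetP WV z2 z2W) (rz z1 z1W) (rz z2 z2W) nz1 nz2.
by move: z2Q; rewrite -e (disjointFr dPQ z1P).
Qed.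

Lemma paired_cover_grow W u v x y : u != v -> x != y -> W \subset V ->
  paired_cover W u v x y -> paired_cover V u v x y.
Proof.
move=> uv xy; have [m] := ubnP #|V :\: W|; elim: m W => // m IH W small WV cW.
have [/eqP|[r]] := set_0Vmem (V :\: W).
  by rewrite setD_eq0 => VW; rewrite (_ : V = W) //; apply/eqP; rewrite eqEsubset VW.
rewrite inE => /andP [rW rV]; apply: (IH (r |: W)).
- by move: small; rewrite (cardsD1 r) !inE rW rV setDDl setUC.
- by rewrite subUset sub1set rV.
- exact: paired_cover_setU1.
Qed.

(* If a and b are not adjacent, every other vertex is adjacent to both. *)
Lemma short_path a b (F : seq T) :
  a \in V -> b \in V -> a != b -> a \in F -> b \in F -> (~~ adj a b -> size F < #|V|) ->
  exists p, [/\ is_path_between adj p a b, {subset p <= V}, size p <= 3 &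
    {in p, forall w, w \in F -> (w == a) || (w == b)}].
Proof.
move=> aV bV ab aF bF small; have [ab_adj|ab_nadj] := boolP (adj a b).
  exists [:: a; b]; split=> //.
  - by apply/path_between_cons; rewrite /= inE ab ab_adj.
  - by move=> w; rewrite !inE => /orP [] /eqP ->.
  - by move=> w; rewrite !inE.
have [r rV rF] := exists_notin (small ab_nadj).
have [ra rb] : r != a /\ r != b by split; apply: contraNneq rF => ->.
have [ar|nar] := boolP (adj a r); last first.
  have ar' : a != r by rewrite eq_sym.
  by move: rb; rewrite -(nonadj aV bV rV ab ar' ab_nadj nar) eqxx.
have [rb_adj|nrb] := boolP (adj r b); last first.
  have ba : b != a by rewrite eq_sym.
  have br : b != r by rewrite eq_sym.
  rewrite adj_sym in nrb; rewrite adj_sym in ab_nadj.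
  by move: ra; rewrite -(nonadj bV aV rV ba br ab_nadj nrb) eqxx.
exists [:: a; r; b]; split=> //.
- apply/path_between_cons; split=> //=; last by rewrite ar rb_adj.
  by rewrite !inE !negb_or ab eq_sym ra rb.
- by move=> w; rewrite !inE => /or3P [] /eqP ->.
- by move=> w; rewrite !inE => /or3P [] /eqP ->; rewrite ?eqxx ?orbT ?(negbTE rF).
Qed.

Hypothesis complete_or_big : {in V &, forall w z, w != z -> adj w z} \/ 6 <= #|V|.

Lemma paired_2_coverable_nearly_complete : paired_2_coverable_on V.
Proof.
move=> u v x y uV vV xV yV uq; have [uv ux uy [vx vy xy]] := uniq4_neq uq.
have big a b : a \in V -> b \in V -> a != b -> ~~ adj a b -> 6 <= #|V|.
  by case: complete_or_big => [cV aV bV ab|//]; rewrite cV.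
have [P [hP PV sP PF]] : exists P, [/\ is_path_between adj P u v, {subset P <= V}, size P <= 3 &
    {in P, forall w, w \in [:: u; v; x; y] -> (w == u) || (w == v)}].
  apply: short_path => //; rewrite ?inE ?eqxx ?orbT //.
  by move=> nuv; apply: ltnW (big u v uV vV uv nuv).
have [Q [hQ QV sQ QF]] : exists Q, [/\ is_path_between adj Q x y, {subset Q <= V}, size Q <= 3 &
    {in Q, forall w, w \in P ++ [:: x; y] -> (w == x) || (w == y)}].
  apply: short_path => //; rewrite ?mem_cat ?inE ?eqxx ?orbT //.
  move=> nxy; apply: leq_trans (big x y xV yV xy nxy).
  by rewrite size_cat addn2 !ltnS.
have dPQ : [disjoint P & Q].
  apply/disjointP => w wP wQ; have := QF w wQ; rewrite mem_cat wP => /(_ isT).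
  case/orP=> /eqP ew; have := PF w wP; rewrite ew !inE eqxx !orbT => /(_ isT).
    by rewrite (eq_sym x u) (eq_sym x v) (negbTE ux) (negbTE vx).
  by rewrite (eq_sym y u) (eq_sym y v) (negbTE uy) (negbTE vy).
pose W := [set w | (w \in P) || (w \in Q)].
apply: (paired_cover_grow (W := W)) => //.
- by apply/subsetP => w; rewrite inE => /orP [/PV|/QV].
- by exists P, Q; split=> // w; rewrite inE.
Qed.

Lemma hamiltonian_connected_nearly_complete : 4 <= #|V| -> hamiltonian_connected_on V.
Proof.
move=> big4 u v uV vV uv.
have [a aV] := exists_notin (s := [:: u; v]) (ltnW big4).
rewrite !inE negb_or => /andP [au av].
have [b [bV bu bv ba ab]] : exists b, [/\ b \in V, b != u, b != v, b != a & adj a b].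
  have [b1 b1V] := exists_notin (s := [:: u; v; a]) big4.
  rewrite !inE !negb_or => /and3P [b1u b1v b1a].
  have [ab1|nab1] := boolP (adj a b1); first by exists b1.
  case: complete_or_big => [cV|big6]; first by exists b1; rewrite cV // eq_sym.
  have [b2 b2V] := exists_notin (s := [:: u; v; a; b1]) (ltnW big6).
  rewrite !inE !negb_or => /and4P [b2u b2v b2a b2b1].
  have [ab2|nab2] := boolP (adj a b2); first by exists b2.
  have ab1' : a != b1 by rewrite eq_sym.
  have ab2' : a != b2 by rewrite eq_sym.
  by move: b2b1; rewrite (nonadj aV b1V b2V ab1' ab2' nab1 nab2) eqxx.
have [|P [Q [hP hQ dPQ cPQ]]] := paired_2_coverable_nearly_complete uV aV bV vV.
  by apply: uniq4_of_neq => //; rewrite eq_sym.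
exists (P ++ Q); first exact: path_between_cat hP hQ ab dPQ.
by move=> w; rewrite mem_cat cPQ.
Qed.

Lemma nearly_complete_coverable :
  4 <= #|V| -> hamiltonian_connected_on V /\ paired_2_coverable_on V.
Proof.
split; [exact: hamiltonian_connected_nearly_complete | exact: paired_2_coverable_nearly_complete].
Qed.

End NearlyComplete.

End Covers.

Section Johnson.

Variables n k : nat.
Local Notation vertex := (johnson_vertex n k).
Local Notation jadj := (johnson_adj n k).
Implicit Types (A B X : vertex) (C D S : {set 'I_n}) (a i j : 'I_n).

Definition jinterval C D : {set vertex} :=
  [set A : vertex | (C \subset val A) && (val A \subset D)].

Lemma in_jinterval C D A : (A \in jinterval C D) = (C \subset val A) && (val A \subset D).
Proof. by rewrite inE. Qed.

Lemma card_jvertex A : #|val A| = k.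
Proof. exact/eqP/(valP A). Qed.

Lemma johnson_adj_sym : symmetric jadj.
Proof. by move=> A B; rewrite /johnson_adj setIC. Qed.

Lemma card_jvertex_setI_lt A B : A != B -> #|val A :&: val B| < k.
Proof.
apply: contraNT; rewrite -leqNgt -val_eqE => kAB.
have eqI X : val A :&: val B \subset val X -> val A :&: val B = val X.
  by move=> sub; apply/eqP; rewrite eqEcard sub card_jvertex.
by rewrite -{1}(eqI A (subsetIl _ _)) (eqI B (subsetIr _ _)).
Qed.

Lemma card_jvertexD1 A a : a \in val A -> #|val A :\ a| = k.-1.
Proof. by move=> aA; have := cardsD1 a (val A); rewrite aA card_jvertex => /(congr1 predn) ->. Qed.

Lemma val_imset_jvertex (X : {set vertex}) S :
  #|S| = k -> (forall A, val A = S -> A \in X) -> S \in val @: X.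
Proof. by move=> /eqP Sk SX; apply/imsetP; exists (exist _ S Sk) => //; apply: SX. Qed.

Lemma card_exchange A i j : i \in val A -> j \notin val A -> #|j |: (val A :\ i)| = k.
Proof.
move=> iA jA; have : 0 < #|val A| by apply/card_gt0P; exists i.
rewrite card_jvertex => k_gt0.
by rewrite cardsU1 in_setD1 (negbTE jA) andbF card_jvertexD1 // add1n prednK.
Qed.

Lemma johnson_adj_exchange A X i j :
  i \in val A -> j \notin val A -> val X = j |: (val A :\ i) -> jadj A X.
Proof.
move=> iA jA eX; rewrite /johnson_adj eX -(card_jvertexD1 iA).
suff -> : val A :&: (j |: (val A :\ i)) = val A :\ i by [].
apply/setP => w; rewrite !inE; have [->|_] := eqVneq w j; first by rewrite (negbTE jA) andbF.
by case: (w \in val A); rewrite ?andbT ?andbF.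
Qed.

Lemma jinterval_split C D a : jinterval C D = jinterval C (D :\ a) :|: jinterval (a |: C) D.
Proof.
apply/setP => A; rewrite in_setU !in_jinterval subUset sub1set subsetD1.
by case: (a \in val A); rewrite /= ?andbT ?andbF ?orbF.
Qed.

Lemma mem_jinterval_U1 C D a A : A \in jinterval (a |: C) D -> a \in val A.
Proof. by rewrite in_jinterval subUset sub1set => /andP [/andP []]. Qed.

Lemma notin_jinterval_D1 C D a B : B \in jinterval C (D :\ a) -> a \notin val B.
Proof. by rewrite in_jinterval subsetD1 => /and3P []. Qed.

Lemma disjoint_jinterval_split C D a : [disjoint jinterval C (D :\ a) & jinterval (a |: C) D].
Proof. by apply/disjointP => A /notin_jinterval_D1/negP aA /mem_jinterval_U1/aA. Qed.

Lemma card_jinterval_split C D a :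
  #|jinterval C D| = #|jinterval C (D :\ a)| + #|jinterval (a |: C) D|.
Proof.
rewrite (jinterval_split C D a) -cardsUI.
by rewrite (disjoint_setI0 (disjoint_jinterval_split C D a)) cards0 addn0.
Qed.

Lemma johnson_adj_setD1_sub A B a :
  a \in val A -> a \notin val B -> jadj A B -> val A :\ a \subset val B.
Proof.
move=> aA aB /eqP AB; suff <- : val A :&: val B = val A :\ a by apply: subsetIr.
apply/eqP; rewrite eqEcard card_jvertexD1 // AB leqnn andbT.
apply/subsetP => w; rewrite !inE => /andP [wA wB]; rewrite wA andbT.
by apply: contraNneq aB => <-.
Qed.

(* The only common neighbour of B1 and B2 containing a is a |: (B1 :&: B2). *)
Lemma common_neighbour_up_uniq C D a B1 B2 X X' :
  B1 \in jinterval C (D :\ a) -> B2 \in jinterval C (D :\ a) -> B1 != B2 ->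
  X \in jinterval (a |: C) D -> X' \in jinterval (a |: C) D ->
  jadj B1 X -> jadj B2 X -> jadj B1 X' -> jadj B2 X' -> X = X'.
Proof.
move=> B1J B2J B12 XJ X'J.
suff eY Y : Y \in jinterval (a |: C) D -> jadj B1 Y -> jadj B2 Y ->
    val Y = a |: (val B1 :&: val B2).
  by move=> b1 b2 b1' b2'; apply: val_inj; rewrite (eY X) // (eY X').
move=> YJ b1 b2; have aY := mem_jinterval_U1 YJ.
have sub B : B \in jinterval C (D :\ a) -> jadj B Y -> val Y :\ a \subset val B.
  by move=> BJ; rewrite johnson_adj_sym; apply: johnson_adj_setD1_sub aY (notin_jinterval_D1 BJ).
rewrite -{1}(setD1K aY); congr (a |: _); apply/eqP.
rewrite eqEcard subsetI sub // sub // card_jvertexD1 //=.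
by rewrite -ltnS (ltn_predK (card_jvertex_setI_lt B12)) card_jvertex_setI_lt.
Qed.

(* The only common neighbour of A1 and A2 avoiding a is (A1 :\ a) :|: (A2 :\ a). *)
Lemma common_neighbour_down_uniq C D a A1 A2 X X' :
  A1 \in jinterval (a |: C) D -> A2 \in jinterval (a |: C) D -> A1 != A2 ->
  X \in jinterval C (D :\ a) -> X' \in jinterval C (D :\ a) ->
  jadj A1 X -> jadj A2 X -> jadj A1 X' -> jadj A2 X' -> X = X'.
Proof.
move=> A1J A2J A12 XJ X'J; have aA1 := mem_jinterval_U1 A1J; have aA2 := mem_jinterval_U1 A2J.
set U := (val A1 :\ a) :|: (val A2 :\ a).
have bigU : k <= #|U|.
  rewrite leqNgt; apply: contra A12 => small.
  have kU : #|U| <= k.-1 by rewrite -ltnS (ltn_predK small).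
  have e1 : val A1 :\ a = U by apply/eqP; rewrite eqEcard subsetUl card_jvertexD1.
  have e2 : val A2 :\ a = U by apply/eqP; rewrite eqEcard subsetUr card_jvertexD1.
  by rewrite -val_eqE -(setD1K aA1) -(setD1K aA2) e1 e2.
suff eY Y : Y \in jinterval C (D :\ a) -> jadj A1 Y -> jadj A2 Y -> val Y = U.
  by move=> b1 b2 b1' b2'; apply: val_inj; rewrite (eY X) // (eY X').
move=> YJ h1 h2; have aY := notin_jinterval_D1 YJ.
apply/esym/eqP; rewrite eqEcard card_jvertex bigU andbT subUset.
by rewrite (johnson_adj_setD1_sub aA1 aY h1) (johnson_adj_setD1_sub aA2 aY h2).
Qed.

Lemma deg_jinterval_up C D a B : a \in D -> B \in jinterval C (D :\ a) ->
  #|val B :\: C| <= deg_in jadj (jinterval (a |: C) D) B.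
Proof.
move=> aD; rewrite in_jinterval subsetD1 => /and3P [CB BD aB].
have f_inj : {in val B :\: C &, injective (fun i => a |: (val B :\ i))}.
  move=> i j /setDP [iB _] /setDP [jB _].
  have ia : (i == a) = false by apply: contraNF aB => /eqP <-.
  by move/setP/(_ i); rewrite !inE eqxx iB ia /= andbT => /esym/negbFE/eqP.
rewrite -(card_in_imset f_inj); apply: card_le_preimage val_inj _.
move=> _ /imsetP [i /setDP [iB iC] ->].
apply: val_imset_jvertex (card_exchange iB aB) _ => X eX.
have CBi : C \subset val B :\ i by rewrite subsetD1 CB iC.
rewrite inE (johnson_adj_exchange iB aB eX) andbT in_jinterval eX (setUS _ CBi) /=.
by rewrite subUset sub1set aD (subset_trans (subsetDl _ _) BD).
Qed.

Lemma deg_jinterval_down C D a A : a \notin C -> A \in jinterval (a |: C) D ->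
  #|D :\: val A| <= deg_in jadj (jinterval C (D :\ a)) A.
Proof.
move=> aC AJ; have aA := mem_jinterval_U1 AJ.
move: AJ; rewrite in_jinterval subUset sub1set => /andP [/andP [_ CA] AD].
have f_inj : {in D :\: val A &, injective (fun j => j |: (val A :\ a))}.
  move=> i j /setDP [_ iA] /setDP [_ jA] /setP /(_ i).
  by rewrite !inE eqxx (negbTE iA) !andbF !orbF => /esym/eqP.
rewrite -(card_in_imset f_inj); apply: card_le_preimage val_inj _.
move=> _ /imsetP [j /setDP [jD jA] ->].
apply: val_imset_jvertex (card_exchange aA jA) _ => X eX.
have ja : j != a by apply: contraNneq jA => ->.
have CAa : C \subset val A :\ a by rewrite subsetD1 CA aC.
rewrite inE (johnson_adj_exchange aA jA eX) andbT in_jinterval eX.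
by rewrite (subset_trans CAa (subsetUr _ _)) subUset sub1set !inE ja jD setSD.
Qed.

Lemma card_jinterval_bottom C D : C \subset D -> k = #|C|.+1 ->
  #|D| - #|C| <= #|jinterval C D|.
Proof.
move=> CD ek; rewrite -(cardsDS CD).
have f_inj : {in D :\: C &, injective (fun d => d |: C)}.
  move=> d e /setDP [_ dC] /setDP [_ eC] /setP /(_ d).
  by rewrite !inE eqxx (negbTE dC) !orbF => /esym/eqP.
rewrite -(card_in_imset f_inj); apply: card_le_preimage val_inj _.
move=> _ /imsetP [d /setDP [dD dC] ->].
apply: val_imset_jvertex => [|X eX]; first by rewrite cardsU1 dC ek.
by rewrite in_jinterval eX subsetUr subUset sub1set dD CD.
Qed.

Lemma card_jinterval_top C D : C \subset D -> k = #|D|.-1 ->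
  #|D| - #|C| <= #|jinterval C D|.
Proof.
move=> CD ek; rewrite -(cardsDS CD).
have f_inj : {in D :\: C &, injective (fun d => D :\ d)}.
  move=> d e /setDP [dD _] /setDP [eD _] /setP /(_ d).
  by rewrite !inE eqxx dD !andbT /= => /esym/negbFE/eqP.
rewrite -(card_in_imset f_inj); apply: card_le_preimage val_inj _.
move=> _ /imsetP [d /setDP [dD dC] ->].
apply: val_imset_jvertex => [|X eX]; first by rewrite ek (cardsD1 d D) dD.
by rewrite in_jinterval eX subsetD1 CD dC subsetDl.
Qed.

Lemma card_jinterval_ge C D : C \subset D -> #|C| < k < #|D| ->
  #|D| - #|C| <= #|jinterval C D|.
Proof.
have [m] := ubnP (#|D| - #|C|); elim: m C D => // m IH C D small CD /andP [Ck kD].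
have [bottom|Ck1] := eqVneq k #|C|.+1; first exact: card_jinterval_bottom.
have [top|kD1] := eqVneq k #|D|.-1; first exact: card_jinterval_top.
have [a aD aC] := exists_setD (ltn_trans Ck kD).
have eD : #|D :\ a| = #|D|.-1 by rewrite (cardsD1 a D) aD.
have eC : #|a |: C| = #|C|.+1 by rewrite cardsU1 aC.
have lower := IH C (D :\ a); have upper := IH (a |: C) D.
rewrite subsetD1 CD aC eD in lower; rewrite subUset sub1set aD CD eC in upper.
rewrite (card_jinterval_split C D a).
move: small Ck kD Ck1 kD1 lower upper; move: #|D| #|C| #|jinterval _ _| #|jinterval _ _|.
by move=> d c l u; rewrite -!subn1; lia.
Qed.

Lemma jinterval_complete_bottom C D : k = #|C|.+1 ->
  {in jinterval C D &, forall A B, A != B -> jadj A B}.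
Proof.
move=> ek A B; rewrite !in_jinterval => /andP [CA _] /andP [CB _] AB.
rewrite /johnson_adj (_ : k.-1 = #|C|) ?ek // eqn_leq -ltnS -ek card_jvertex_setI_lt //=.
by rewrite subset_leq_card // subsetI CA CB.
Qed.

Lemma jinterval_complete_top C D : k = #|D|.-1 ->
  {in jinterval C D &, forall A B, A != B -> jadj A B}.
Proof.
move=> ek A B; rewrite !in_jinterval => /andP [_ AD] /andP [_ BD] AB.
have lt := card_jvertex_setI_lt AB.
have AB_D : #|val A :|: val B| <= #|D| by apply: subset_leq_card; rewrite subUset AD BD.
have := cardsUI (val A) (val B); rewrite !card_jvertex /johnson_adj.
move: lt AB_D ek; move: #|_ :|: _| #|_ :&: _| #|D| => u i d; rewrite -!subn1; lia.
Qed.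

(* J(4, 2) is the octahedron: the only non-neighbour of A is its complement. *)
Lemma jinterval_octahedron C D : C \subset D -> #|D| = #|C| + 4 -> k = #|C| + 2 ->
  at_most_one_nonneighbour jadj (jinterval C D).
Proof.
move=> CD eD ek.
suff opp A X : A \in jinterval C D -> X \in jinterval C D -> A != X -> ~~ jadj A X ->
    val X = C :|: (D :\: val A).
  by move=> A X X' AJ XJ X'J AX AX' nX nX'; apply: val_inj; rewrite (opp A X) // (opp A X').
rewrite !in_jinterval => /andP [CA AD] /andP [CX XD] AX nAX.
have small : #|val A :&: val X| <= #|C|.
  move: nAX (card_jvertex_setI_lt AX); rewrite /johnson_adj.
  by move: #|_ :&: _| => i; rewrite ek -subn1; lia.
have eI : val A :&: val X = C by apply/esym/eqP; rewrite eqEcard subsetI CA CX small.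
apply/eqP; rewrite eqEcard; apply/andP; split.
  apply/subsetP => x xX; rewrite !inE (subsetP XD x xX) andbT.
  by have [xA|] := boolP (x \in val A); rewrite ?orbT // -eI inE xA xX.
apply: leq_trans (leq_card_setU _ _) _; rewrite (cardsDS AD) !card_jvertex eD ek.
by move: #|C| => c; lia.
Qed.

Lemma jinterval_coverable_join C D a : a \in D -> a \notin C ->
  #|C|.+1 < k -> k < #|D|.-1 -> 4 < #|D| - #|C| ->
  4 <= #|jinterval C (D :\ a)| -> 4 <= #|jinterval (a |: C) D| ->
  hamiltonian_connected_on jadj (jinterval C (D :\ a)) ->
  paired_2_coverable_on jadj (jinterval C (D :\ a)) ->
  hamiltonian_connected_on jadj (jinterval (a |: C) D) ->
  paired_2_coverable_on jadj (jinterval (a |: C) D) ->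
  hamiltonian_connected_on jadj (jinterval C D) /\ paired_2_coverable_on jadj (jinterval C D).
Proof.
move=> aD aC Ck kD m5 bigL bigU hcL pcL hcU pcU.
set L := jinterval C (D :\ a); set U := jinterval (a |: C) D.
have degL B : B \in L -> k - #|C| <= deg_in jadj U B.
  move=> BL; apply: leq_trans (deg_jinterval_up aD BL).
  by move: BL; rewrite in_jinterval => /andP [CB _]; rewrite (cardsDS CB) card_jvertex.
have degU A : A \in U -> #|D| - k <= deg_in jadj L A.
  move=> AU; apply: leq_trans (deg_jinterval_down aC AU).
  by move: AU; rewrite in_jinterval => /andP [_ AD]; rewrite (cardsDS AD) card_jvertex.
have degLU : {in L, forall B, 1 < deg_in jadj U B}.
  by move=> B /degL; apply: leq_trans; rewrite ltn_subRL addn1.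
have degUL : {in U, forall A, 1 < deg_in jadj L A}.
  by move=> A /degU; apply: leq_trans; rewrite ltn_subRL addn1 -ltn_predRL.
have cross : cross_edges jadj L U.
  have [deg3|deg2] := leqP 3 (k - #|C|).
    apply: (cross_edges_sym johnson_adj_sym).
    apply: (cross_edges_of_degree johnson_adj_sym) => //.
      by move=> B /degL; apply: leq_trans.
    exact: common_neighbour_up_uniq.
  apply: (cross_edges_of_degree johnson_adj_sym) => //.
    move=> A /degU; apply: leq_trans.
    by move: m5 deg2; move: #|D| #|C| => d c; lia.
  exact: common_neighbour_down_uniq.
have LU := disjoint_jinterval_split C D a.
rewrite (jinterval_split C D a); split.
  by apply: (hamiltonian_connected_join johnson_adj_sym LU) => //; apply/ltnW/ltnW.
exact: (paired_2_coverable_join johnson_adj_sym LU).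
Qed.

Lemma jinterval_coverable C D : C \subset D -> 4 <= #|D| - #|C| -> #|C| < k < #|D| ->
  hamiltonian_connected_on jadj (jinterval C D) /\ paired_2_coverable_on jadj (jinterval C D).
Proof.
have [m] := ubnP (#|D| - #|C|); elim: m C D => // m IH C D small CD m4 /andP [Ck kD].
have J4 : 4 <= #|jinterval C D| by apply: leq_trans m4 (card_jinterval_ge CD _); rewrite Ck.
have base := nearly_complete_coverable johnson_adj_sym (V := jinterval C D) _ _ J4.
have [bottom|Ck1] := eqVneq k #|C|.+1.
  have cJ := jinterval_complete_bottom (D := D) bottom.
  by apply: base; [exact: complete_nonneighbour | left].
have [top|kD1] := eqVneq k #|D|.-1.
  have cJ := jinterval_complete_top (C := C) top.
  by apply: base; [exact: complete_nonneighbour | left].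
have [a aD aC] := exists_setD (ltn_trans Ck kD).
have CDa : C \subset D :\ a by rewrite subsetD1 CD aC.
have CaD : a |: C \subset D by rewrite subUset sub1set aD CD.
have eD : #|D :\ a| = #|D|.-1 by rewrite (cardsD1 a D) aD.
have eC : #|a |: C| = #|C|.+1 by rewrite cardsU1 aC.
have kL : #|C| < k < #|D :\ a| by rewrite Ck eD ltn_neqAle kD1 -ltnS (ltn_predK kD) kD.
have kU : #|a |: C| < k < #|D| by rewrite kD eC ltn_neqAle eq_sym Ck1 Ck.
have mL : #|D :\ a| - #|C| = (#|D| - #|C|).-1 by rewrite eD -!subn1; lia.
have mU : #|D| - #|a |: C| = (#|D| - #|C|).-1 by rewrite eC -!subn1; lia.
have bigL := card_jinterval_ge CDa kL; have bigU := card_jinterval_ge CaD kU.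
rewrite mL in bigL; rewrite mU in bigU.
have [m4e|m5] := eqVneq (#|D| - #|C|) 4.
  apply: base; first by apply: jinterval_octahedron => //; lia.
  by right; rewrite (card_jinterval_split C D a); move: bigL bigU; rewrite m4e; apply: leq_add.
have m5' : 4 < #|D| - #|C| by rewrite ltn_neqAle eq_sym m5 m4.
have IH' C' D' : C' \subset D' -> #|D'| - #|C'| = (#|D| - #|C|).-1 -> #|C'| < k < #|D'| ->
    hamiltonian_connected_on jadj (jinterval C' D') /\ paired_2_coverable_on jadj (jinterval C' D').
  move=> CD' mD' kD'; apply: IH => //; rewrite mD'.
    by move: small m4; move: (#|D| - #|C|) => d; rewrite -subn1; lia.
  by move: m5'; move: (#|D| - #|C|) => d; rewrite -subn1; lia.
have [hcL pcL] := IH' _ _ CDa mL kL; have [hcU pcU] := IH' _ _ CaD mU kU.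
apply: (jinterval_coverable_join aD aC) => //.
- by rewrite ltn_neqAle eq_sym Ck1 Ck.
- by move: kL; rewrite eD => /andP [].
- by apply: leq_trans bigL; move: m5'; move: (#|D| - #|C|) => d; lia.
- by apply: leq_trans bigU; move: m5'; move: (#|D| - #|C|) => d; lia.
Qed.

End Johnson.

Theorem theorem4 (n k : nat) :
  4 <= n -> 1 <= k -> k < n -> paired_2_coverable (johnson_adj n k).
Proof.
move=> n4 k1 kn; apply: paired_2_coverable_setT.
have -> : [set: johnson_vertex n k] = jinterval k set0 setT.
  by apply/setP => A; rewrite in_setT in_jinterval sub0set subsetT.
have := @jinterval_coverable n k set0 setT (sub0set _).
by rewrite cards0 cardsT card_ord subn0 k1 kn => /(_ n4 isT) [].
Qed.
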